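(* Let $\Pi_2$ be a PARITY$_2$ program. Then there is a canonical program $\Pi_2'$ with $var(\Pi_2')\subseteq\{x_1,x_2\}$ and $Ans(\Pi_2')=$ PARITY$_2$ $=\{\{x_1\},\{x_2\}\}$, such that $Ans(\Pi_2')$ equals the set of models (subsets of $\{x_1,x_2\}$) of $Comp(\Pi_2')$, and $|\Pi_2'|\le|\Pi_2|$.
   Context: A rule element is one of $\top$, $\bot$, $x$, $not\ x$, $not\ not\ x$, where $x$ is a variable. A (canonical) rule is $H\leftarrow B$ with $H$ a variable or $\bot$ and $B$ a finite set of rule elements; a canonical program is a finite set of rules. For a set of variables $I$: $I\models\top$; $I\not\models\bot$; $I\models x$ iff $I\models not\ not\ x$ iff $x\in I$; $I\models not\ x$ iff $x\notin I$; $I\models B$ iff $I$ satisfies every element of $B$; $I$ is closed under $H\leftarrow B$ if $I\models B$ implies $I\models H$. The reduct $\Pi^I$ replaces $not\ not\ x$ by $\top$ if $x\in I$ else $\bot$, and $not\ x$ by $\top$ if $x\notin I$ else $\bot$; $I$ is an answer set of $\Pi$ if $I$ is the least set closed under all rules of $\Pi^I$; $Ans(\Pi)$ is the set of answer sets; $var(\Pi)$ is the set of variables occurring in $\Pi$; $|\Pi|$ is the number of rules. Strings $w\in\{0,1\}^n$ are identified with $\{x_i:w_i=1\}$; PARITY$_n$ is the set of strings in $\{0,1\}^n$ with an odd number of 1's; a PARITY$_n$ program is a canonical program $\Pi$ with $var(\Pi)=\{x_1,\dots,x_n\}$ and $Ans(\Pi)=$ PARITY$_n$. Completion (over signature $\{x_1,\dots,x_n\}$):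 for a body $B$, $\tilde B$ is the conjunction of its elements with $not$ read as $\neg$. $Comp(\Pi)$ is the conjunction of: for each $x_i$, $x_i\leftrightarrow(\tilde B_1\vee\dots\vee\tilde B_m)$ where $x_i\leftarrow B_1,\dots,x_i\leftarrow B_m$ are all rules with head $x_i$ (empty disjunction $=\bot$); and for each rule $\bot\leftarrow B$, the formula $\neg\tilde B$. *)

From HB Require Import structures.
From mathcomp Require Import all_boot.
Set Implicit Arguments. Unset Strict Implicit. Unset Printing Implicit Defensive.

(* Variables: x_i is represented by the natural number i (x_1 = 1, x_2 = 2). *)
Definition var := nat.

Inductive elem := ETop | EBot | EPos of var | ENeg of var | ENN of var.

Definition elem_eqb (a b : elem) : bool :=
  match a, b with
  | ETop, ETop | EBot, EBot => true
  | EPos x, EPos y | ENeg x, ENeg y | ENN x, ENN y => x == y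
  | _, _ => false
  end.

Lemma elem_eqP : Equality.axiom elem_eqb.
Proof.
by case=> [||x|x|x] [||y|y|y] /=; try (by constructor);
  apply: (iffP eqP) => [->|[]].
Qed.

HB.instance Definition _ := hasDecEq.Build elem elem_eqP.

(* A rule H <- B: head [None] stands for _|_, [Some x] for variable x;
   the body B (a finite set) is represented by a list of elements. *)
Definition rule := (option var * seq elem)%type.
Definition program := seq rule.

Definition vset := var -> bool.

Definition sat_elem (I : vset) (e : elem) : bool :=
  match e with
  | ETop => true
  | EBot => false
  | EPos x => I x
  | ENeg x => ~~ I x
  | ENN x => I x
  end.

Definition sat_body (I : vset) (B : seq elem) : bool := all (sat_elem I) B.

Definition sat_head (I : vset) (H : option var) : bool :=
  if H is Some x then I x else false.

Definition closed_rule (I : vset) (r : rule) : Prop :=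
  sat_body I r.2 -> sat_head I r.1.

Definition closed_prog (I : vset) (P : program) : Prop :=
  forall r, r \in P -> closed_rule I r.

Definition reduct_elem (I : vset) (e : elem) : elem :=
  match e with
  | ENN x => if I x then ETop else EBot
  | ENeg x => if I x then EBot else ETop
  | e => e
  end.

Definition reduct (P : program) (I : vset) : program :=
  [seq (r.1, [seq reduct_elem I e | e <- r.2]) | r <- P].

Definition answer_set (P : program) (I : vset) : Prop :=
  closed_prog I (reduct P I) /\
  forall J : vset, closed_prog J (reduct P I) -> forall x, I x -> J x.

Definition elem_vars (e : elem) : seq var :=
  match e with
  | EPos x | ENeg x | ENN x => [:: x]
  | _ => [::]
  end.

Definition rule_vars (r : rule) : seq var :=
  (if r.1 is Some x then [:: x] else [::]) ++ flatten (map elem_vars r.2).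

Definition prog_vars (P : program) : seq var := flatten (map rule_vars P).

(* Number of rules |Pi|: rules are identified up to equality of heads and of
   bodies as sets, so duplicates in the list representation are not counted. *)
Definition rule_equiv (r s : rule) : bool :=
  (r.1 == s.1) && all (fun e => e \in s.2) r.2 && all (fun e => e \in r.2) s.2.

Fixpoint nrules (P : program) : nat :=
  match P with
  | [::] => 0
  | r :: P' => (if has (rule_equiv r) P' then 0 else 1) + nrules P'
  end.

Definition parity (n : nat) (I : vset) : Prop :=
  (forall x, I x -> 1 <= x <= n) /\ odd (count I (iota 1 n)).

Definition parity_program (n : nat) (P : program) : Prop :=
  (forall x, x \in prog_vars P <-> 1 <= x <= n) /\
  (forall I, answer_set P I <-> parity n I).

Inductive form :=
  | FTop | FBot | FVar of var | FNot of form
  | FAnd of form & form | FOr of form & form | FIff of form & form.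

Fixpoint eval (I : vset) (f : form) : bool :=
  match f with
  | FTop => true
  | FBot => false
  | FVar x => I x
  | FNot g => ~~ eval I g
  | FAnd g h => eval I g && eval I h
  | FOr g h => eval I g || eval I h
  | FIff g h => eval I g == eval I h
  end.

Definition elem_form (e : elem) : form :=
  match e with
  | ETop => FTop
  | EBot => FBot
  | EPos x => FVar x
  | ENeg x => FNot (FVar x)
  | ENN x => FNot (FNot (FVar x))
  end.

Definition body_form (B : seq elem) : form := foldr FAnd FTop (map elem_form B).

Definition comp (n : nat) (P : program) : form :=
  FAnd
    (foldr FAnd FTop
       [seq FIff (FVar i)
              (foldr FOr FBot [seq body_form r.2 | r <- P & r.1 == Some i])
       | i <- iota 1 n])
    (foldr FAnd FTop [seq FNot (body_form r.2) | r <- P & r.1 == None]).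

Definition comp_model (n : nat) (P : program) (I : vset) : Prop :=
  (forall x, I x -> 1 <= x <= n) /\ eval I (comp n P).

(* Every atom of an answer set is supported: if no rule has head x, removing x
   from an answer set I keeps it closed under the reduct, contradicting
   minimality.  Hence a PARITY_2 program, having the answer sets {x_1} and
   {x_2}, contains rules with heads x_1 and x_2, so it has at least two rules.
   The two-rule program {x_1 <- not x_2, x_2 <- not x_1} has exactly the
   answer sets {x_1} and {x_2}, which are also the models of its completion
   x_1 <-> not x_2, x_2 <-> not x_1. *)
From Stdlib Require Import Setoid.
From mathcomp Require Import all_boot.

(* Reduct bodies contain no negation, so their satisfaction is monotone. *)
Lemma sat_body_reduct_mono {I J : vset} {B : seq elem} :
  (forall x, J x -> I x) ->
  sat_body J [seq reduct_elem I e | e <- B] ->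
  sat_body I [seq reduct_elem I e | e <- B].
Proof.
move=> JI; rewrite /sat_body !all_map; apply: sub_all => -[||x|x|x] //=.
- exact: JI.
- by case: (I x).
- by case: (I x).
Qed.

Lemma answer_set_supported {P : program} {I : vset} {x : var} :
  answer_set P I -> I x -> exists2 r, r \in P & r.1 = Some x.
Proof.
move=> [Icl Imin] Ix.
have [/hasP [r rP /eqP] | noHead] := boolP (has (fun r : rule => r.1 == Some x) P).
  by exists r.
pose J : vset := fun y => I y && (y != x).
have Jcl : closed_prog J (reduct P I).
  move=> _ /mapP [[h B] rP ->]; rewrite /closed_rule /= => JB.
  have JI y : J y -> I y by case/andP.
  have IB := sat_body_reduct_mono JI JB.
  move: (Icl _ (map_f _ rP) IB); case: h rP => [y|//] rP /= Iy.
  rewrite /J Iy; apply/eqP => yx; subst y.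
  by move/hasP: noHead; apply; exists (Some x, B).
by move: (Imin J Jcl x Ix); rewrite /J eqxx andbF.
Qed.

Lemma nrules_gt0 {P : program} {r : rule} : r \in P -> 0 < nrules P.
Proof.
elim: P r => //= a P IH r; rewrite in_cons => /orP [_ | /IH].
  by case: ifP => // /hasP [r' r'P _]; exact: IH r'P.
by move=> pos; rewrite addnC ltn_addr.
Qed.

Lemma nrules_gt1 {P : program} {r1 r2 : rule} :
  r1 \in P -> r2 \in P -> r1.1 != r2.1 -> 1 < nrules P.
Proof.
elim: P r1 r2 => //= a P IH r1 r2.
rewrite !in_cons => /orP [/eqP-> | P1] /orP [/eqP-> | P2] heads.
- by rewrite eqxx in heads.
- case: ifP => [/hasP [r' r'P /andP [/andP [/eqP E _] _]] | _].
    by apply: (IH r' r2); rewrite -?E.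
  by rewrite add1n ltnS; exact: nrules_gt0 P2.
- case: ifP => [/hasP [r' r'P /andP [/andP [/eqP E _] _]] | _].
    by apply: (IH r1 r'); rewrite -?E.
  by rewrite add1n ltnS; exact: nrules_gt0 P1.
- by rewrite addnC ltn_addr // (IH r1 r2).
Qed.

Lemma parity_program_nrules (P : program) :
  parity_program 2 P -> 1 < nrules P.
Proof.
move=> [_ HP].
have A1 : answer_set P (fun y => y == 1) by apply/HP; split=> // x /eqP->.
have A2 : answer_set P (fun y => y == 2) by apply/HP; split=> // x /eqP->.
have [r1 r1P head1] := answer_set_supported A1 (eqxx 1).
have [r2 r2P head2] := answer_set_supported A2 (eqxx 2).
by apply: (nrules_gt1 r1P r2P); rewrite head1 head2.
Qed.

Lemma parity2E (I : vset) :
  parity 2 I <-> (forall x, I x -> 1 <= x <= 2) /\ I 1 != I 2.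
Proof. by rewrite /parity /= addn0; case: (I 1); case: (I 2). Qed.

Definition xor2 : program := [:: (Some 1, [:: ENeg 2]); (Some 2, [:: ENeg 1])].

Lemma xor2_vars (x : var) : x \in prog_vars xor2 -> 1 <= x <= 2.
Proof. by rewrite !inE => /or4P [] /eqP->. Qed.

Lemma closed_reduct_xor2 (I J : vset) :
  closed_prog J (reduct xor2 I) <-> (~~ I 2 -> J 1) /\ (~~ I 1 -> J 2).
Proof.
rewrite /closed_prog /closed_rule /=; split.
  move=> Jcl; split=> nI.
    by apply: (Jcl (Some 1, _) (mem_head _ _)); rewrite /= (negbTE nI).
  by apply: (Jcl (Some 2, _)); rewrite ?inE ?eqxx ?orbT //= (negbTE nI).
move=> [J1 J2] r; rewrite !inE => /orP [] /eqP-> /=.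
- by case: (I 2) J1 => // ->.
- by case: (I 1) J2 => // ->.
Qed.

Lemma answer_set_xor2 (I : vset) : answer_set xor2 I <-> parity 2 I.
Proof.
rewrite parity2E; split.
  move=> A; split.
    move=> x /(answer_set_supported A) [r].
    by rewrite !inE => /orP [] /eqP-> [<-].
  move: A => [/closed_reduct_xor2 [I1 I2] Imin].
  case E1: (I 1); case E2: (I 2) => //=.
    have empty_closed : closed_prog (fun=> false) (reduct xor2 I).
      by apply/closed_reduct_xor2; rewrite E1 E2.
    by move: (Imin _ empty_closed 1); rewrite E1 => /(_ isT).
  by move: (I1 (negbT E2)); rewrite E1.
move=> [bounded I12]; split.
  by apply/closed_reduct_xor2; split=> /negPf E; move: I12; rewrite E; case: (I _).
move=> J /closed_reduct_xor2 [J1 J2] x Ix.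
move: (bounded x Ix); case: x Ix => [|[|[|]]] //= Ix _.
- by apply: J1; move: I12; rewrite Ix; case: (I 2).
- by apply: J2; move: I12; rewrite Ix; case: (I 1).
Qed.

Lemma comp_model_xor2 (I : vset) : comp_model 2 xor2 I <-> parity 2 I.
Proof.
rewrite parity2E /comp_model /=.
by split=> -[bounded val]; split=> //; move: val; case: (I 1); case: (I 2).
Qed.

Theorem mainTheorem9 (P2 : program) :
  parity_program 2 P2 ->
  exists P2' : program,
    (forall x, x \in prog_vars P2' -> 1 <= x <= 2) /\
    (forall I, answer_set P2' I <-> parity 2 I) /\
    (forall I, answer_set P2' I <-> comp_model 2 P2' I) /\
    nrules P2' <= nrules P2.
Proof.
move=> par2; exists xor2; split; first exact: xor2_vars.
split; first exact: answer_set_xor2.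
split; last exact: parity_program_nrules.
by move=> I; rewrite answer_set_xor2 comp_model_xor2.
Qed.
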